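(* For all $x\in\mathbb{R}^n$, $\lambda\in\mathbb{R}^m$ with $x_i\ge0$ for $i\in[n_b]$ and $\lambda_j\ge0$ for $j\in[m_I]$, $$\operatorname{dist}((x,\lambda),\Omega)\le\theta\big(\|(x,\lambda)\|^2+1\big)^{1/2}\operatorname{dist}(0,T_\ell(x,\lambda)).$$
   Context: LP: $\min_{x\in\mathbb{R}^n}c^\top x$ s.t. $A_Ix\le b_I$, $A_Ex=b_E$, $x_1,\dots,x_{n_b}\ge0$, where $A_I\in\mathbb{R}^{m_I\times n}$, $A_E\in\mathbb{R}^{m_E\times n}$, $m=m_I+m_E$, $A=[A_I;A_E]$, $b=[b_I;b_E]$, $n_b\in[n]$. Write $x_b=(x_1,\dots,x_{n_b})$, $\lambda_I=(\lambda_1,\dots,\lambda_{m_I})$. For $v\in\mathbb{R}^N$ and $k\le N$, $[v]_+^k$ (resp. $[v]_-^k$) is the projection of $v$ onto $\mathbb{R}_+^k\times\mathbb{R}^{N-k}$ (resp. $\mathbb{R}_-^k\times\mathbb{R}^{N-k}$). $T_\ell(x,\lambda)=\{(v,u)\in\mathbb{R}^{n+m}: v\in c+A^\top\lambda+N_{\{x_b\ge0\}}(x),\ u\in b-Ax+N_{\{\lambda_I\ge0\}}(\lambda)\}$, where $N_S$ denotes the normal cone of the convex set $S$ (empty outside $S$); $\operatorname{dist}(0,\emptyset)=+\infty$. Assume the LP has an optimal solution, so that $\Omega:=T_\ell^{-1}(0,0)=\{(x,\lambda):x_b\ge0,\lambda_I\ge0,\ c^\top x+b^\top\lambda=0,\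 [A^\top\lambda+c]_-^{n_b}=0,\ [Ax-b]_+^{m_I}=0\}$ is nonempty. $\theta$ is the smallest constant such that $\operatorname{dist}((x,\lambda),\Omega)\le\theta\|[c^\top x+b^\top\lambda;\ [A^\top\lambda+c]_-^{n_b};\ [Ax-b]_+^{m_I}]\|$ for all $(x,\lambda)$ with $x_b\ge0$, $\lambda_I\ge0$. Norms and distances are Euclidean. *)

From HB Require Import structures.
From mathcomp Require Import all_boot all_order all_algebra.
From mathcomp Require Import classical_sets boolp reals ereal.
Set Implicit Arguments. Unset Strict Implicit. Unset Printing Implicit Defensive.
Import Order.TTheory GRing.Theory Num.Theory.
Local Open Scope ring_scope.
Local Open Scope classical_set_scope.

Section LPDefs.
Variable R : realType.

Definition vnorm (k : nat) (v : 'cV[R]_k) : R :=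
  Num.sqrt (\sum_(i < k) v i 0 ^+ 2).

Definition pnorm (n m : nat) (x : 'cV[R]_n) (l : 'cV[R]_m) : R :=
  Num.sqrt (\sum_(i < n) x i 0 ^+ 2 + \sum_(j < m) l j 0 ^+ 2).

(* Euclidean distance from a point to a set of pairs; +oo for the empty set *)
Definition pdist (n m : nat) (p : 'cV[R]_n * 'cV[R]_m)
    (S : set ('cV[R]_n * 'cV[R]_m)) : \bar R :=
  ereal_inf [set (pnorm (p.1 - q.1) (p.2 - q.2))%:E | q in S].

(* normal cone of a convex set S at x (empty if x is not in S) *)
Definition normal_cone (k : nat) (S : set 'cV[R]_k) (x : 'cV[R]_k)
    : set 'cV[R]_k :=
  [set v | S x /\ forall y, S y -> (v^T *m (y - x)) 0 0 <= 0].

Definition nonneg_first (k kb : nat) : set 'cV[R]_k :=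
  [set x | forall i : 'I_k, (i < kb)%N -> 0 <= x i 0].

Definition proj_plus (k kb : nat) (v : 'cV[R]_k) : 'cV[R]_k :=
  \col_i (if (i < kb)%N then Num.max (v i 0) 0 else v i 0).
Definition proj_minus (k kb : nat) (v : 'cV[R]_k) : 'cV[R]_k :=
  \col_i (if (i < kb)%N then Num.min (v i 0) 0 else v i 0).

Variables (n nb mI mE : nat).
Variables (A : 'M[R]_(mI + mE, n)) (b : 'cV[R]_(mI + mE)) (c : 'cV[R]_n).

Definition T_l (x : 'cV[R]_n) (l : 'cV[R]_(mI + mE))
    : set ('cV[R]_n * 'cV[R]_(mI + mE)) :=
  [set vu | normal_cone (@nonneg_first n nb) x (vu.1 - (c + A^T *m l))
         /\ normal_cone (@nonneg_first (mI + mE) mI) l (vu.2 - (b - A *m x))].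

Definition Omega : set ('cV[R]_n * 'cV[R]_(mI + mE)) :=
  [set p | T_l p.1 p.2 (0, 0)].

Definition lp_feasible (x : 'cV[R]_n) : Prop :=
  @nonneg_first n nb x /\
  (forall i : 'I_(mI + mE), (i < mI)%N -> (A *m x) i 0 <= b i 0) /\
  (forall i : 'I_(mI + mE), (mI <= i)%N -> (A *m x) i 0 = b i 0).

Definition lp_has_optimal : Prop :=
  exists x, lp_feasible x /\ forall y, lp_feasible y -> (c^T *m x) 0 0 <= (c^T *m y) 0 0.

Definition residual (x : 'cV[R]_n) (l : 'cV[R]_(mI + mE)) : R :=
  Num.sqrt (((c^T *m x) 0 0 + (b^T *m l) 0 0) ^+ 2
            + vnorm (@proj_minus n nb (A^T *m l + c)) ^+ 2
            + vnorm (@proj_plus (mI + mE) mI (A *m x - b)) ^+ 2).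

Definition error_bound_const (t : R) : Prop :=
  forall x l, @nonneg_first n nb x -> @nonneg_first (mI + mE) mI l ->
    (pdist (x, l) Omega <= (t * residual x l)%:E)%E.

End LPDefs.

From HB Require Import structures.
From mathcomp Require Import all_boot all_order all_algebra.
From mathcomp Require Import classical_sets boolp reals ereal.
From mathcomp Require Import ring lra.
Import Order.TTheory GRing.Theory Num.Theory.
Local Open Scope ring_scope.

(* For (v, u) in T_l(x, l), the vectors w = v - (c + A^T l) and z = u - (b - A x)
   lie in the normal cones of the sign constraints: they are nonpositive on the
   constrained coordinates, vanish on the others, and are orthogonal to x and l.
   Hence the duality gap c^T x + b^T l equals v^T x + u^T l, while
   [A^T l + c]_- = [v - w]_- and [A x - b]_+ = -[u - z]_- are dominated
   coordinatewise by v and u.  Cauchy-Schwarz then bounds the residual by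
   |(v, u)| (|(x, l)|^2 + 1)^(1/2), and the error bound with constant theta,
   applied at the infimum over T_l(x, l), gives the claim. *)

Section Norms.
Variable R : realType.

Lemma sum_sqr_ge0 (I : finType) (a : I -> R) : 0 <= \sum_i a i ^+ 2.
Proof. by apply: sumr_ge0 => i _; apply: sqr_ge0. Qed.

Lemma vnorm_sqr k (v : 'cV[R]_k) : vnorm v ^+ 2 = \sum_i v i 0 ^+ 2.
Proof. exact/sqr_sqrtr/sum_sqr_ge0. Qed.

Lemma vnormN k (v : 'cV[R]_k) : vnorm (- v) = vnorm v.
Proof. by rewrite /vnorm; under eq_bigr do rewrite mxE sqrrN. Qed.

Lemma pnorm_col_mx n m (x : 'cV[R]_n) (l : 'cV[R]_m) :
  pnorm x l = vnorm (col_mx x l).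
Proof.
rewrite /vnorm big_split_ord /=; under eq_bigr do rewrite col_mxEu.
by under [X in _ + X]eq_bigr do rewrite col_mxEd.
Qed.

Lemma pnorm_sqr n m (x : 'cV[R]_n) (l : 'cV[R]_m) :
  pnorm x l ^+ 2 = vnorm x ^+ 2 + vnorm l ^+ 2.
Proof. by rewrite !vnorm_sqr sqr_sqrtr // addr_ge0 // sum_sqr_ge0. Qed.

Lemma pnormN n m (x : 'cV[R]_n) (l : 'cV[R]_m) : pnorm (- x) (- l) = pnorm x l.
Proof. by rewrite !pnorm_col_mx -opp_col_mx vnormN. Qed.

Lemma dotmxE k (u v : 'cV[R]_k) : (u^T *m v) 0 0 = \sum_i u i 0 * v i 0.
Proof. by rewrite mxE; under eq_bigr do rewrite mxE. Qed.

(* Lagrange's identity: the defect in Cauchy-Schwarz is a sum of squares. *)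
Lemma sum_mul_sqr_le (I : finType) (a b : I -> R) :
  (\sum_i a i * b i) ^+ 2 <= (\sum_i a i ^+ 2) * (\sum_i b i ^+ 2).
Proof.
have : 0 <= \sum_i \sum_j (a i * b j - a j * b i) ^+ 2.
  by apply: sumr_ge0 => i _; apply: sum_sqr_ge0.
have -> : \sum_i \sum_j (a i * b j - a j * b i) ^+ 2 =
    \sum_i \sum_j a i ^+ 2 * b j ^+ 2 + \sum_i \sum_j a j ^+ 2 * b i ^+ 2
    - 2 * \sum_i \sum_j (a i * b i) * (a j * b j).
  rewrite mulr_sumr -big_split -sumrB; apply: eq_bigr => i _.
  by rewrite mulr_sumr -big_split -sumrB; apply: eq_bigr => j _ /=; ring.
rewrite [X in _ + X - _]exchange_big -!big_distrlr /= -expr2.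
lra.
Qed.

Lemma dotmxC k (u v : 'cV[R]_k) : (u^T *m v) 0 0 = (v^T *m u) 0 0.
Proof. by rewrite !dotmxE; apply: eq_bigr => i _; rewrite mulrC. Qed.

Lemma dotmx_delta k (w : 'cV[R]_k) i : (w^T *m delta_mx i (0 : 'I_1)) 0 0 = w i 0.
Proof. by rewrite -colE !mxE. Qed.

Lemma dotmx_sqr_le k (u v : 'cV[R]_k) :
  (u^T *m v) 0 0 ^+ 2 <= vnorm u ^+ 2 * vnorm v ^+ 2.
Proof. by rewrite dotmxE !vnorm_sqr; apply: sum_mul_sqr_le. Qed.

End Norms.

Section NormalCone.
Variable R : realType.

Lemma normal_cone_nonneg_firstP k kb (x w : 'cV[R]_k) :
  normal_cone (nonneg_first kb) x w ->
  [/\ forall i : 'I_k, (i < kb)%N -> w i 0 <= 0,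
      forall i : 'I_k, ~~ (i < kb)%N -> w i 0 = 0 &
      (w^T *m x) 0 0 = 0].
Proof.
move=> [x_ge0 w_normal].
have w_feas e : nonneg_first kb (x + e) -> (w^T *m e) 0 0 <= 0.
  by move=> /w_normal; rewrite addrAC subrr add0r.
have w_le0 i : w i 0 <= 0.
  rewrite -dotmx_delta; apply: w_feas => j j_lt; rewrite !mxE.
  by apply: addr_ge0; [exact: x_ge0 | case: (_ && _)].
split=> [i _ | i i_ge | ]; first exact: w_le0.
  have : (w^T *m - delta_mx i (0 : 'I_1)) 0 0 <= 0.
    apply: w_feas => j j_lt; rewrite !mxE (_ : (j == i) = false) ?subr0.
      exact: x_ge0.
    by apply: contraNF i_ge => /eqP <-.
  by rewrite mulmxN mxE dotmx_delta oppr_le0 => w_ge0; apply/eqP; rewrite eq_le w_le0.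
have : (w^T *m - x) 0 0 <= 0 by apply: w_feas => j _; rewrite subrr mxE.
rewrite mulmxN mxE oppr_le0 => wx_ge0; apply/eqP; rewrite eq_le wx_ge0 andbT.
by apply: w_feas => j j_lt; rewrite mxE addr_ge0 ?x_ge0.
Qed.

Lemma proj_plusN k kb (v : 'cV[R]_k) : proj_plus kb (- v) = - proj_minus kb v.
Proof. by apply/matrixP => i j; rewrite !mxE; case: ifP; rewrite // oppr_min oppr0. Qed.

Lemma vnorm_proj_minus_subr_le k kb (v w : 'cV[R]_k) :
  (forall i : 'I_k, (i < kb)%N -> w i 0 <= 0) ->
  (forall i : 'I_k, ~~ (i < kb)%N -> w i 0 = 0) ->
  vnorm (proj_minus kb (v - w)) <= vnorm v.
Proof.
move=> w_le0 w_eq0; apply/ler_wsqrtr/ler_sum => i _; rewrite !mxE.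
case: ifP => [/w_le0 wi_le0 | /negbT/w_eq0 ->]; last by rewrite subr0.
by rewrite minEle; case: ifP => [vw_le0 | _]; nra.
Qed.

End NormalCone.

Section Residual.
Variables (R : realType) (n nb mI mE : nat).
Variables (A : 'M[R]_(mI + mE, n)) (b : 'cV[R]_(mI + mE)) (c : 'cV[R]_n).
Variables (x : 'cV[R]_n) (l : 'cV[R]_(mI + mE)).
Variables (v : 'cV[R]_n) (u : 'cV[R]_(mI + mE)).
Hypothesis vu_T_l : T_l nb A b c x l (v, u).

Lemma T_l_duality_gap :
  (c^T *m x) 0 0 + (b^T *m l) 0 0 = (v^T *m x) 0 0 + (u^T *m l) 0 0.
Proof.
case: vu_T_l => /= /normal_cone_nonneg_firstP[_ _ wx0].
move=> /normal_cone_nonneg_firstP[_ _ zl0].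
have Axl : ((A *m x)^T *m l) 0 0 = ((A^T *m l)^T *m x) 0 0.
  by rewrite trmx_mul -mulmxA dotmxC.
have entryD (M N : 'M[R]_1) : (M + N) 0 0 = M 0 0 + N 0 0 by rewrite mxE.
have entryN (M : 'M[R]_1) : (- M) 0 0 = - M 0 0 by rewrite mxE.
move: wx0 zl0; rewrite !(raddfB, raddfD, raddfN) /= !(mulmxBl, mulmxDl, mulNmx).
rewrite !(entryD, entryN) Axl.
lra.
Qed.

Lemma residual_le_T_l :
  residual nb A b c x l <= pnorm v u * Num.sqrt (pnorm x l ^+ 2 + 1).
Proof.
have gap_le :
    ((c^T *m x) 0 0 + (b^T *m l) 0 0) ^+ 2 <= pnorm v u ^+ 2 * pnorm x l ^+ 2.
  rewrite T_l_duality_gap !pnorm_col_mx.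
  have -> : (v^T *m x) 0 0 + (u^T *m l) 0 0 = ((col_mx v u)^T *m col_mx x l) 0 0.
    by rewrite tr_col_mx mul_row_col [RHS]mxE.
  exact: dotmx_sqr_le.
case: vu_T_l => /= /normal_cone_nonneg_firstP[w_le0 w_eq0 _].
move=> /normal_cone_nonneg_firstP[z_le0 z_eq0 _].
have minus_le : vnorm (proj_minus nb (A^T *m l + c)) ^+ 2 <= vnorm v ^+ 2.
  rewrite ler_sqr ?nnegrE ?sqrtr_ge0 // addrC -[c + _](subKr v).
  exact: vnorm_proj_minus_subr_le.
have plus_le : vnorm (proj_plus mI (A *m x - b)) ^+ 2 <= vnorm u ^+ 2.
  rewrite ler_sqr ?nnegrE ?sqrtr_ge0 // -[A *m x - b]opprB.
  rewrite -[b - A *m x](subKr u) proj_plusN vnormN.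
  exact: vnorm_proj_minus_subr_le.
rewrite -[pnorm v u]ger0_norm ?sqrtr_ge0 // -sqrtr_sqr -sqrtrM ?sqr_ge0 //.
apply: ler_wsqrtr; rewrite mulrDr mulr1 [pnorm v u ^+ 2 in X in _ <= _ + X]pnorm_sqr.
lra.
Qed.

End Residual.

Lemma pdist0_ge (R : realType) n m (S : set ('cV[R]_n * 'cV[R]_m)) (r : R) :
  (forall p, S p -> r <= pnorm p.1 p.2) -> (r%:E <= pdist (0%R, 0%R) S)%E.
Proof.
move=> r_le; apply: le_ereal_inf_tmp => _ [p Sp <-].
by rewrite lee_fin /= !sub0r pnormN r_le.
Qed.

Theorem lemma3 (R : realType) (n nb mI mE : nat)
  (A : 'M[R]_(mI + mE, n)) (b : 'cV[R]_(mI + mE)) (c : 'cV[R]_n)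
  (theta : R)
  (Hnb : (1 <= nb <= n)%N)
  (Hopt : lp_has_optimal nb A b c)
  (Htheta0 : 0 <= theta)
  (Htheta : error_bound_const nb A b c theta)
  (Htheta_min : forall t : R, 0 <= t -> error_bound_const nb A b c t -> theta <= t) :
  forall (x : 'cV[R]_n) (l : 'cV[R]_(mI + mE)),
    @nonneg_first R n nb x -> @nonneg_first R (mI + mE) mI l ->
    (pdist (x, l) (Omega nb A b c)
      <= (theta * Num.sqrt (pnorm x l ^+ 2 + 1))%:E
         * pdist (0%R, 0%R) (T_l nb A b c x l))%E.
Proof.
move=> x l x_ge0 l_ge0.
set s := Num.sqrt _; set r := residual nb A b c x l.
have s_gt0 : 0 < s by rewrite sqrtr_gt0 ltr_pwDr ?sqr_ge0.
have r_le : ((r / s)%:E <= pdist (0%R, 0%R) (T_l nb A b c x l))%E.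
  apply: pdist0_ge => -[v u] /residual_le_T_l.
  by rewrite ler_pdivrMr.
apply: le_trans (Htheta x l x_ge0 l_ge0) _.
have -> : theta * r = theta * s * (r / s) by field; rewrite gt_eqF.
rewrite EFinM; apply: lee_wpmul2l => //.
by rewrite lee_fin; apply: mulr_ge0 Htheta0 (ltW s_gt0).
Qed.
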